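(* Let $h$ be smooth near $(0,0)$ with Taylor expansion $h(x,y)=a^2x^2+b^2y^2+\sum_{m+n\ge3}h_{m,n}x^my^n$, $a,b>0$, and let $z$ be a $C^3$ solution of $z_x^2+z_y^2=h$ near $(0,0)$ with $z(0,0)=0$. If $a\ne b$, then $z(x,y)=\frac12(\pm ax^2\pm by^2)+O((|x|+|y|)^3)$ for some choice of signs. If $a=b$, the same conclusion holds after a change of coordinates $(x,y)\mapsto(x\cos\xi+y\sin\xi,\,-x\sin\xi+y\cos\xi)$ for some angle $\xi$. *)

From Stdlib Require Import Reals.
From Coquelicot Require Import Coquelicot.
Open Scope R_scope.

Definition dx (f : R -> R -> R) : R -> R -> R :=
  fun x y => Derive (fun t => f t y) x.
Definition dy (f : R -> R -> R) : R -> R -> R :=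
  fun x y => Derive (fun t => f x t) y.

Definition sq (r : R) (x y : R) : Prop := Rabs x < r /\ Rabs y < r.

Definition cont2 (f : R -> R -> R) (x y : R) : Prop :=
  continuous (fun p : R * R => f (fst p) (snd p)) (x, y).

Fixpoint Ck (k : nat) (U : R -> R -> Prop) (f : R -> R -> R) : Prop :=
  match k with
  | O => forall x y, U x y -> cont2 f x y
  | S k' =>
      (forall x y, U x y -> cont2 f x y) /\
      (forall x y, U x y ->
         ex_derive (fun t => f t y) x /\ ex_derive (fun t => f x t) y) /\
      Ck k' U (dx f) /\ Ck k' U (dy f)
  end.

Definition Cinf (U : R -> R -> Prop) (f : R -> R -> R) : Prop :=
  forall k, Ck k U f.

Definition bigO3 (g : R -> R -> R) : Prop :=
  exists C delta, 0 < delta /\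
    forall x y, Rabs x + Rabs y < delta ->
      Rabs (g x y) <= C * (Rabs x + Rabs y) ^ 3.

Definition pm1 (s : R) : Prop := s = 1 \/ s = -1.

From Stdlib Require Import Reals Lra.
From Coquelicot Require Import Coquelicot.
Open Scope R_scope.

(* Since h(0,0) = 0 and z_x^2 + z_y^2 = h, the gradient of z vanishes at the
   origin.  Differentiating the equation twice there shows that the Hessian
   M = [[p, q], [q, s]] of z at the origin satisfies 2 M^2 = Hess h(0,0), i.e.
   M^2 = diag(a^2, b^2).  Such a symmetric square root is diag(±a, ±b) when
   a <> b; when a = b it is either ±a I or a reflection
   a [[cos 2xi, sin 2xi], [sin 2xi, -cos 2xi]], which the rotation by xi turns
   into diag(a, -a).  The second-order Taylor formula for the C^3 function z
   then gives the expansion. *)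

Lemma Ck_cont {k U f x y} : Ck k U f -> U x y -> cont2 f x y.
Proof. destruct k; [intro Hf | intros [Hf _]]; exact (Hf x y). Qed.

Lemma Ck_ex_derive_x {k U f x y} : Ck (S k) U f -> U x y -> ex_derive (fun t => f t y) x.
Proof. intros (_ & Hd & _) Hxy. exact (proj1 (Hd x y Hxy)). Qed.

Lemma Ck_ex_derive_y {k U f x y} : Ck (S k) U f -> U x y -> ex_derive (fun t => f x t) y.
Proof. intros (_ & Hd & _) Hxy. exact (proj2 (Hd x y Hxy)). Qed.

Lemma Ck_dx {k U f} : Ck (S k) U f -> Ck k U (dx f).
Proof. intros (_ & _ & Hdx & _). exact Hdx. Qed.

Lemma Ck_dy {k U f} : Ck (S k) U f -> Ck k U (dy f).
Proof. intros (_ & _ & _ & Hdy). exact Hdy. Qed.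

Lemma Ck_ex_diff_n {k U f x y} : Ck k U f -> U x y -> ex_diff_n f k x y.
Proof.
  revert f. induction k as [|k IH]; intros f Hf Hxy.
  - split; [apply continuity_2d_pt_filterlim, (Hf x y Hxy) | exact I].
  - destruct Hf as (Hc & Hd & Hdx & Hdy).
    repeat split.
    + apply continuity_2d_pt_filterlim, (Hc x y Hxy).
    + exact (proj1 (Hd x y Hxy)).
    + exact (proj2 (Hd x y Hxy)).
    + exact (IH _ Hdx Hxy).
    + exact (IH _ Hdy Hxy).
Qed.

Lemma Ck_dx_dy_comm {k U f x y} :
  Ck (S (S k)) U f -> locally_2d U x y -> dx (dy f) x y = dy (dx f) x y.
Proof.
  intros Hf HU. apply Schwarz.
  - apply (locally_2d_impl U); [apply locally_2d_forall | exact HU].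
    intros u v Huv. repeat split.
    + exact (Ck_ex_derive_x Hf Huv).
    + exact (Ck_ex_derive_y Hf Huv).
    + exact (Ck_ex_derive_x (Ck_dy Hf) Huv).
    + exact (Ck_ex_derive_y (Ck_dx Hf) Huv).
  - apply continuity_2d_pt_filterlim.
    exact (Ck_cont (Ck_dx (Ck_dy Hf)) (locally_2d_singleton _ _ _ HU)).
  - apply continuity_2d_pt_filterlim.
    exact (Ck_cont (Ck_dy (Ck_dx Hf)) (locally_2d_singleton _ _ _ HU)).
Qed.

Lemma sq_open r x y : sq r x y -> locally_2d (sq r) x y.
Proof.
  intros [Hx Hy].
  assert (Hd : 0 < r - Rmax (Rabs x) (Rabs y)) by (pose proof (Rmax_lub_lt _ _ _ Hx Hy); lra).
  exists (mkposreal _ Hd). simpl. intros u v Hu Hv.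
  pose proof (Rmax_l (Rabs x) (Rabs y)). pose proof (Rmax_r (Rabs x) (Rabs y)).
  pose proof (Rabs_triang_inv u x). pose proof (Rabs_triang_inv v y).
  split; lra.
Qed.

Lemma bigO3_ext (f g : R -> R -> R) :
  bigO3 f -> (forall x y, f x y = g x y) -> bigO3 g.
Proof.
  intros (C & d & Hd & Hf) Hfg. exists C, d. split; [exact Hd |].
  intros x y Hxy. rewrite <- Hfg. exact (Hf x y Hxy).
Qed.

Lemma DL_regular_2_bigO3 f :
  DL_regular_n f 2 0 0 -> bigO3 (fun x y => f x y - DL_pol 2 f 0 0 x y).
Proof.
  intros [D [d Hf]]. exists (Rabs D), d. split; [apply cond_pos |].
  intros x y Hxy.
  pose proof (Rabs_pos x). pose proof (Rabs_pos y).
  specialize (Hf x y). rewrite !Rminus_0_r in Hf.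
  eapply Rle_trans; [apply Hf; lra |].
  set (m := Rmax (Rabs x) (Rabs y)).
  assert (Hm : 0 <= m <= Rabs x + Rabs y).
  { split; [apply (Rle_trans _ _ _ (Rabs_pos x) (Rmax_l _ _)) | apply Rmax_lub; lra]. }
  apply Rle_trans with (Rabs D * m ^ 3).
  - apply Rmult_le_compat_r; [apply pow_le; lra | apply Rle_abs].
  - apply Rmult_le_compat_l; [apply Rabs_pos | apply pow_incr; lra].
Qed.

Lemma DL_pol_2_origin f u v :
  DL_pol 2 f 0 0 u v = f 0 0 + dx f 0 0 * u + dy f 0 0 * v
    + / 2 * (dx (dx f) 0 0 * u ^ 2 + 2 * dx (dy f) 0 0 * u * v + dy (dy f) 0 0 * v ^ 2).
Proof.
  unfold DL_pol, differential. simpl.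
  unfold dx, dy, Binomial.C, partial_derive. simpl. field.
Qed.

Lemma Ck3_taylor2_bigO3 U z :
  locally_2d U 0 0 -> Ck 3 U z ->
  bigO3 (fun x y => z x y - (z 0 0 + dx z 0 0 * x + dy z 0 0 * y
    + / 2 * (dx (dx z) 0 0 * x ^ 2 + 2 * dx (dy z) 0 0 * x * y + dy (dy z) 0 0 * y ^ 2))).
Proof.
  intros HU Hz. eapply bigO3_ext.
  - apply DL_regular_2_bigO3, Taylor_Lagrange_2d.
    apply (locally_2d_impl U); [apply locally_2d_forall | exact HU].
    intros u v. exact (Ck_ex_diff_n Hz).
  - intros x y. cbv beta. rewrite DL_pol_2_origin. reflexivity.
Qed.

Lemma Derive_sum_sq (f u v : R -> R) x :
  locally x (fun t => f t = u t ^ 2 + v t ^ 2) ->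
  ex_derive u x -> ex_derive v x ->
  Derive f x = 2 * u x * Derive u x + 2 * v x * Derive v x.
Proof.
  intros Hf Hu Hv. rewrite (Derive_ext_loc _ _ _ Hf).
  apply is_derive_unique. auto_derive.
  - repeat split; assumption.
  - change (fun t => u t) with u. change (fun t => v t) with v. ring.
Qed.

Lemma Derive_sum_prod_vanishing (g u U v V : R -> R) x :
  locally x (fun t => g t = 2 * u t * U t + 2 * v t * V t) ->
  ex_derive u x -> ex_derive U x -> ex_derive v x -> ex_derive V x ->
  u x = 0 -> v x = 0 ->
  Derive g x = 2 * Derive u x * U x + 2 * Derive v x * V x.
Proof.
  intros Hg Hu HU Hv HV Hu0 Hv0.
  rewrite (Derive_ext_loc _ _ _ Hg).
  apply is_derive_unique. auto_derive.
  - repeat split; assumption.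
  - rewrite Hu0, Hv0. change (fun t => u t) with u. change (fun t => v t) with v. ring.
Qed.

Section Eikonal.

Variables (U : R -> R -> Prop) (h z : R -> R -> R).
Hypothesis U_open : forall x y, U x y -> locally_2d U x y.
Hypothesis z_C3 : Ck 3 U z.
Hypothesis eikonal : forall x y, U x y -> dx z x y ^ 2 + dy z x y ^ 2 = h x y.

Lemma open_near_x (P : R -> R -> Prop) x y :
  U x y -> (forall a b, U a b -> P a b) -> locally x (fun t => P t y).
Proof.
  intros Hxy HP. apply locally_2d_1d_const_y.
  apply (locally_2d_impl U); [apply locally_2d_forall, HP | exact (U_open x y Hxy)].
Qed.

Lemma open_near_y (P : R -> R -> Prop) x y :
  U x y -> (forall a b, U a b -> P a b) -> locally y (fun t => P x t).
Proof.
  intros Hxy HP. apply locally_2d_1d_const_x.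
  apply (locally_2d_impl U); [apply locally_2d_forall, HP | exact (U_open x y Hxy)].
Qed.

Lemma eikonal_critical x y : U x y -> h x y = 0 -> dx z x y = 0 /\ dy z x y = 0.
Proof. intros Hxy Hh. pose proof (eikonal x y Hxy) as E. rewrite Hh in E. split; nra. Qed.

Lemma dx_eikonal x y : U x y ->
  dx h x y = 2 * dx z x y * dx (dx z) x y + 2 * dy z x y * dx (dy z) x y.
Proof.
  intros Hxy.
  apply (Derive_sum_sq (fun t => h t y) (fun t => dx z t y) (fun t => dy z t y)).
  - apply (open_near_x (fun a b => h a b = dx z a b ^ 2 + dy z a b ^ 2) x y Hxy).
    intros a b Hab. symmetry. exact (eikonal a b Hab).
  - exact (Ck_ex_derive_x (Ck_dx z_C3) Hxy).
  - exact (Ck_ex_derive_x (Ck_dy z_C3) Hxy).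
Qed.

Lemma dy_eikonal x y : U x y ->
  dy h x y = 2 * dx z x y * dy (dx z) x y + 2 * dy z x y * dy (dy z) x y.
Proof.
  intros Hxy.
  apply (Derive_sum_sq (fun t => h x t) (fun t => dx z x t) (fun t => dy z x t)).
  - apply (open_near_y (fun a b => h a b = dx z a b ^ 2 + dy z a b ^ 2) x y Hxy).
    intros a b Hab. symmetry. exact (eikonal a b Hab).
  - exact (Ck_ex_derive_y (Ck_dx z_C3) Hxy).
  - exact (Ck_ex_derive_y (Ck_dy z_C3) Hxy).
Qed.

Lemma dxx_eikonal x y : U x y -> dx z x y = 0 -> dy z x y = 0 ->
  dx (dx h) x y = 2 * (dx (dx z) x y ^ 2 + dx (dy z) x y ^ 2).
Proof.
  intros Hxy Hzx Hzy.
  transitivity (2 * dx (dx z) x y * dx (dx z) x y + 2 * dx (dy z) x y * dx (dy z) x y);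
    [| ring].
  apply (Derive_sum_prod_vanishing (fun t => dx h t y) (fun t => dx z t y)
           (fun t => dx (dx z) t y) (fun t => dy z t y) (fun t => dx (dy z) t y) x);
    try assumption.
  - exact (open_near_x _ x y Hxy dx_eikonal).
  - exact (Ck_ex_derive_x (Ck_dx z_C3) Hxy).
  - exact (Ck_ex_derive_x (Ck_dx (Ck_dx z_C3)) Hxy).
  - exact (Ck_ex_derive_x (Ck_dy z_C3) Hxy).
  - exact (Ck_ex_derive_x (Ck_dx (Ck_dy z_C3)) Hxy).
Qed.

Lemma dxy_eikonal x y : U x y -> dx z x y = 0 -> dy z x y = 0 ->
  dx (dy h) x y = 2 * dx (dy z) x y * (dx (dx z) x y + dy (dy z) x y).
Proof.
  intros Hxy Hzx Hzy.
  transitivity (2 * dx (dx z) x y * dy (dx z) x y + 2 * dx (dy z) x y * dy (dy z) x y).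
  2: { rewrite <- (Ck_dx_dy_comm z_C3 (U_open x y Hxy)). ring. }
  apply (Derive_sum_prod_vanishing (fun t => dy h t y) (fun t => dx z t y)
           (fun t => dy (dx z) t y) (fun t => dy z t y) (fun t => dy (dy z) t y) x);
    try assumption.
  - exact (open_near_x _ x y Hxy dy_eikonal).
  - exact (Ck_ex_derive_x (Ck_dx z_C3) Hxy).
  - exact (Ck_ex_derive_x (Ck_dy (Ck_dx z_C3)) Hxy).
  - exact (Ck_ex_derive_x (Ck_dy z_C3) Hxy).
  - exact (Ck_ex_derive_x (Ck_dy (Ck_dy z_C3)) Hxy).
Qed.

Lemma dyy_eikonal x y : U x y -> dx z x y = 0 -> dy z x y = 0 ->
  dy (dy h) x y = 2 * (dx (dy z) x y ^ 2 + dy (dy z) x y ^ 2).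
Proof.
  intros Hxy Hzx Hzy.
  transitivity (2 * dy (dx z) x y * dy (dx z) x y + 2 * dy (dy z) x y * dy (dy z) x y).
  2: { rewrite <- (Ck_dx_dy_comm z_C3 (U_open x y Hxy)). ring. }
  apply (Derive_sum_prod_vanishing (fun t => dy h x t) (fun t => dx z x t)
           (fun t => dy (dx z) x t) (fun t => dy z x t) (fun t => dy (dy z) x t) y);
    try assumption.
  - exact (open_near_y _ x y Hxy dy_eikonal).
  - exact (Ck_ex_derive_y (Ck_dx z_C3) Hxy).
  - exact (Ck_ex_derive_y (Ck_dy (Ck_dx z_C3)) Hxy).
  - exact (Ck_ex_derive_y (Ck_dy z_C3) Hxy).
  - exact (Ck_ex_derive_y (Ck_dy (Ck_dy z_C3)) Hxy).
Qed.

End Eikonal.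

Lemma pm1_div a p : 0 < a -> p ^ 2 = a ^ 2 -> pm1 (p / a).
Proof.
  intros Ha Hp. assert (E : (p - a) * (p + a) = 0) by lra.
  destruct (Rmult_integral _ _ E); [left; replace p with a | right; replace p with (- a)];
    solve [field; lra | lra].
Qed.

Lemma polar_coordinates a p q :
  0 < a -> p ^ 2 + q ^ 2 = a ^ 2 -> exists th, p = a * cos th /\ q = a * sin th.
Proof.
  intros Ha H.
  assert (Hia : 0 < / a) by (apply Rinv_0_lt_compat; exact Ha).
  assert (Hc : -1 <= p / a <= 1).
  { split; apply Rmult_le_reg_r with a; try field_simplify; nra. }
  assert (Hs : sin (acos (p / a)) = Rabs (q / a)).
  { rewrite sin_acos by exact Hc. rewrite <- sqrt_Rsqr_abs. f_equal.
    unfold Rsqr. field_simplify; [f_equal; lra | lra..]. }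
  destruct (Rle_or_lt 0 q) as [Hq | Hq].
  - exists (acos (p / a)). rewrite cos_acos, Hs by exact Hc.
    rewrite Rabs_pos_eq; [split; field; lra | unfold Rdiv; nra].
  - exists (- acos (p / a)). rewrite cos_neg, sin_neg, cos_acos, Hs by exact Hc.
    rewrite Rabs_left; [split; field; lra | unfold Rdiv; nra].
Qed.

Lemma rotated_sq_diff xi x y :
  (x * cos xi + y * sin xi) ^ 2 - (- x * sin xi + y * cos xi) ^ 2
  = cos (2 * xi) * (x ^ 2 - y ^ 2) + 2 * sin (2 * xi) * x * y.
Proof. rewrite cos_2a, sin_2a. ring. Qed.

(* In the next three lemmas the hypotheses on p, q, s say that the symmetric
   matrix [[p, q], [q, s]] squares to diag(a^2, b^2). *)
Lemma sym_sqrt_diag_offdiag_eq0 a b p q s :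
  0 < a -> 0 < b -> a <> b ->
  p ^ 2 + q ^ 2 = a ^ 2 -> q ^ 2 + s ^ 2 = b ^ 2 -> q * (p + s) = 0 -> q = 0.
Proof.
  intros Ha Hb Hab Ka Kb Kc.
  destruct (Rmult_integral _ _ Kc) as [Hq | Hps]; [exact Hq |].
  exfalso. apply Hab.
  assert (E : (a - b) * (a + b) = 0) by (replace s with (- p) in Kb by lra; nra).
  destruct (Rmult_integral _ _ E); lra.
Qed.

Lemma sym_sqrt_diag_quadratic_form a b p q s :
  0 < a -> 0 < b -> a <> b ->
  p ^ 2 + q ^ 2 = a ^ 2 -> q ^ 2 + s ^ 2 = b ^ 2 -> q * (p + s) = 0 ->
  exists s1 s2, pm1 s1 /\ pm1 s2 /\
    forall x y, p * x ^ 2 + 2 * q * x * y + s * y ^ 2 = s1 * a * x ^ 2 + s2 * b * y ^ 2.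
Proof.
  intros Ha Hb Hab Ka Kb Kc.
  assert (Hq := sym_sqrt_diag_offdiag_eq0 a b p q s Ha Hb Hab Ka Kb Kc). subst q.
  exists (p / a), (s / b).
  split; [apply pm1_div; lra |]. split; [apply pm1_div; lra |].
  intros x y. field. lra.
Qed.

Lemma sym_sqrt_scalar_quadratic_form a p q s :
  0 < a -> p ^ 2 + q ^ 2 = a ^ 2 -> q ^ 2 + s ^ 2 = a ^ 2 -> q * (p + s) = 0 ->
  exists xi s1 s2, pm1 s1 /\ pm1 s2 /\
    forall x y, p * x ^ 2 + 2 * q * x * y + s * y ^ 2
      = s1 * a * (x * cos xi + y * sin xi) ^ 2 + s2 * a * (- x * sin xi + y * cos xi) ^ 2.
Proof.
  intros Ha Ka Kb Kc.
  destruct (Req_dec (p + s) 0) as [Hps | Hps].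
  - destruct (polar_coordinates a p q Ha Ka) as (th & Hp & Hq).
    exists (th / 2), 1, (-1). split; [left; reflexivity |]. split; [right; reflexivity |].
    intros x y.
    transitivity (a * ((x * cos (th / 2) + y * sin (th / 2)) ^ 2
                       - (- x * sin (th / 2) + y * cos (th / 2)) ^ 2)); [| ring].
    rewrite rotated_sq_diff. replace (2 * (th / 2)) with th by field.
    replace s with (- p) by lra. rewrite Hp, Hq. ring.
  - assert (Hq : q = 0) by (destruct (Rmult_integral _ _ Kc); [assumption | contradiction]).
    subst q. exists 0, (p / a), (s / a).
    split; [apply pm1_div; lra |]. split; [apply pm1_div; lra |].
    intros x y. rewrite cos_0, sin_0. field. lra.
Qed.

Theorem proposition4p1 (h z : R -> R -> R) (a b : R) :
  0 < a -> 0 < b ->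
  (* h smooth near (0,0) *)
  (exists r, 0 < r /\ Cinf (sq r) h) ->
  (* Taylor expansion h = a^2 x^2 + b^2 y^2 + sum_{m+n>=3} h_{m,n} x^m y^n,
     i.e. the Taylor coefficients of order <= 2 are as prescribed *)
  h 0 0 = 0 ->
  dx h 0 0 = 0 -> dy h 0 0 = 0 ->
  dx (dx h) 0 0 = 2 * a ^ 2 ->
  dx (dy h) 0 0 = 0 ->
  dy (dy h) 0 0 = 2 * b ^ 2 ->
  (* z is a C^3 solution of z_x^2 + z_y^2 = h near (0,0), z(0,0) = 0 *)
  (exists r, 0 < r /\ Ck 3 (sq r) z /\
     forall x y, sq r x y -> (dx z x y) ^ 2 + (dy z x y) ^ 2 = h x y) ->
  z 0 0 = 0 ->
  (a <> b ->
     exists s1 s2, pm1 s1 /\ pm1 s2 /\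
       bigO3 (fun x y => z x y - / 2 * (s1 * a * x ^ 2 + s2 * b * y ^ 2))) /\
  (a = b ->
     exists xi s1 s2, pm1 s1 /\ pm1 s2 /\
       bigO3 (fun x y =>
         let u := x * cos xi + y * sin xi in
         let v := - x * sin xi + y * cos xi in
         z x y - / 2 * (s1 * a * u ^ 2 + s2 * b * v ^ 2))).
Proof.
  intros Ha Hb _ Hh0 _ _ Hhxx Hhxy Hhyy (r & Hr & Hz & Heik) Hz0.
  assert (Hsq0 : sq r 0 0) by (split; rewrite Rabs_R0; exact Hr).
  destruct (eikonal_critical (sq r) h z Heik 0 0 Hsq0 Hh0) as [Hzx Hzy].
  assert (Hxx := dxx_eikonal (sq r) h z (sq_open r) Hz Heik 0 0 Hsq0 Hzx Hzy).
  assert (Hxy := dxy_eikonal (sq r) h z (sq_open r) Hz Heik 0 0 Hsq0 Hzx Hzy).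
  assert (Hyy := dyy_eikonal (sq r) h z (sq_open r) Hz Heik 0 0 Hsq0 Hzx Hzy).
  assert (T := Ck3_taylor2_bigO3 (sq r) z (sq_open r 0 0 Hsq0) Hz).
  rewrite Hz0, Hzx, Hzy in T.
  set (p := dx (dx z) 0 0) in *. set (q := dx (dy z) 0 0) in *. set (s := dy (dy z) 0 0) in *.
  assert (Ka : p ^ 2 + q ^ 2 = a ^ 2) by lra.
  assert (Kb : q ^ 2 + s ^ 2 = b ^ 2) by lra.
  assert (Kc : q * (p + s) = 0) by lra.
  split; intro Hab.
  - destruct (sym_sqrt_diag_quadratic_form a b p q s Ha Hb Hab Ka Kb Kc) as (s1 & s2 & H1 & H2 & E).
    exists s1, s2. split; [exact H1 |]. split; [exact H2 |].
    apply (bigO3_ext _ _ T). intros x y. rewrite <- E. ring.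
  - subst b.
    destruct (sym_sqrt_scalar_quadratic_form a p q s Ha Ka Kb Kc) as (xi & s1 & s2 & H1 & H2 & E).
    exists xi, s1, s2. split; [exact H1 |]. split; [exact H2 |].
    apply (bigO3_ext _ _ T). intros x y. cbv zeta. rewrite <- E. ring.
Qed.
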